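(* Let $k\geq 1$ and let $\zeta_1,\dots,\zeta_k\in(0,1)$ be real numbers such that $1,\zeta_1,\dots,\zeta_k$ are linearly independent over $\mathbb{Q}$. With the sequences $b_n^{(s)}$, $b_n^{\prime(s)}$ defined in the context, $$\omega\geq\max\left\{\sup_{s\geq 2}\limsup_{n\to\infty}\frac{b^{(s)}_{n+1}-b^{(s)}_n-1}{b^{(s)}_n},\ \sup_{s\ge2}\limsup_{n\to\infty}\frac{b^{\prime(s)}_{n+1}-b^{\prime(s)}_n-1}{b^{\prime(s)}_n}\right\}.$$
   Context: For $X>0$ let $\omega_1(X)$ be the supremum of all real $\nu$ such that $|x|\leq X$, $|\zeta_i x-y_i|\leq X^{-\nu}$ ($1\le i\le k$) has a nonzero solution $(x,y_1,\dots,y_k)\in\mathbb{Z}^{k+1}$; $\omega=\limsup_{X\to\infty}\omega_1(X)$. For an integer $s\ge2$, let $a_1^{i,(s)}<a_2^{i,(s)}<\cdots$ be the positions (after the point) of the nonzero digits in the base-$s$ expansion of $\zeta_i$, and $a_1^{\prime i,(s)}<a_2^{\prime i,(s)}<\cdots$ the positions of the nonzero digits in the base-$s$ expansion of $1-\zeta_i$. Let $(b_n^{(s)})_{n\ge1}$ be the increasing enumeration of $\{a_n^{i,(s)}:1\le i\le k, n\ge1\}$ and $(b_n^{\prime(s)})_{n\ge1}$ the increasing enumeration of $\{a_n^{\prime i,(s)}:1\le i\le k,n\ge1\}$. *)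

From HB Require Import structures.
From mathcomp Require Import all_boot all_order all_algebra.
From mathcomp Require Import all_classical all_reals all_analysis.
Set Implicit Arguments. Unset Strict Implicit. Unset Printing Implicit Defensive.
Import Order.TTheory GRing.Theory Num.Theory.
Import numFieldNormedType.Exports.
Local Open Scope classical_set_scope.
Local Open Scope ring_scope.

(* j-th digit (j >= 1, after the point) of the base-s expansion of z in (0,1):
   floor(s^j z) mod s. *)
Definition digit {R : realType} (s j : nat) (z : R) : int :=
  (Num.floor ((s%:R) ^+ j * z) %% (s%:Z))%Z.

Definition nz_digit_positions {R : realType} {k : nat} (s : nat) (z : 'I_k -> R)
  : set nat :=
  [set j | (1 <= j)%N /\ exists i : 'I_k, digit s j (z i) != 0%Z].

(* b is an increasing enumeration of the set A (indexed from 0: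
   b 0 is the first element, i.e. b_1 of the paper). *)
Definition increasing_enum (A : set nat) (b : nat -> nat) : Prop :=
  (forall n, (b n < b n.+1)%N) /\ range b = A.

Definition approx_exponents {R : realType} {k : nat} (zeta : 'I_k -> R) (X : R)
  : set R :=
  [set nu | exists (x : int) (y : 'I_k -> int),
      (x != 0%Z \/ exists i, y i != 0%Z) /\
      `|(x%:~R : R)| <= X /\
      forall i, `|zeta i * x%:~R - (y i)%:~R| <= X `^ (- nu)].

Definition omega1 {R : realType} {k : nat} (zeta : 'I_k -> R) (X : R) : \bar R :=
  ereal_sup [set nu%:E | nu in approx_exponents zeta X].

Definition omega {R : realType} {k : nat} (zeta : 'I_k -> R) : \bar R :=
  limf_esup (omega1 zeta) (pinfty_nbhs R).

Definition gap_limsup {R : realType} (b : nat -> nat) : \bar R :=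
  limn_esup (fun n => (((b n.+1)%:R - (b n)%:R - 1) / (b n)%:R : R)%:E).

From HB Require Import structures.
From mathcomp Require Import all_boot all_order all_algebra.
From mathcomp Require Import all_classical all_reals all_analysis.
From mathcomp Require Import zify ring lra.
Import Order.TTheory GRing.Theory Num.Theory.
Local Open Scope classical_set_scope.
Local Open Scope ring_scope.

(* If the base-s digits of every zeta_i vanish at the positions strictly between
   b_n and b_(n+1), then for X = s^(b_n) the integers x = X and y_i = floor (X zeta_i)
   satisfy |x zeta_i - y_i| <= s^-(b_(n+1) - b_n - 1) = X^-nu_n with
   nu_n = (b_(n+1) - b_n - 1) / b_n.  So nu_n is an admissible exponent at height X,
   and since X -> oo with n, limsup nu_n <= omega.  For the digits of 1 - zeta_i the
   same x works with y_i replaced by x - y_i. *)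

Section IncreasingEnum.
Context {A : set nat} {b : nat -> nat}.
Hypothesis hb : increasing_enum A b.

Lemma increasing_enum_homo : {homo b : m n / (m <= n)%N}.
Proof. exact/ltnW_homo/(homo_ltn ltn_trans hb.1). Qed.

Lemma increasing_enum_ge n : (n <= b n)%N.
Proof. by elim: n => // n IH; exact: leq_ltn_trans IH (hb.1 n). Qed.

Lemma increasing_enum_gap n j : (b n < j < b n.+1)%N -> ~ A j.
Proof.
move=> /andP[bn_j j_bn1]; rewrite -hb.2 => -[m _ bm_j]; subst j.
have [mn|nm] := leqP m n.
  by have := increasing_enum_homo _ _ mn; rewrite leqNgt bn_j.
by have := increasing_enum_homo _ _ nm; rewrite leqNgt j_bn1.
Qed.

End IncreasingEnum.

Lemma expr_enum_cvgy (R : realType) {s : nat} {A : set nat} {b : nat -> nat} :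
  (2 <= s)%N -> increasing_enum A b ->
  ((s%:R : R) ^+ b n) @[n --> \oo] --> +oo.
Proof.
move=> s2 hb; apply: ger_cvgy cvgr_idn; near=> n.
rewrite -natrX ler_nat (leq_trans (increasing_enum_ge hb n)) //.
by rewrite ltnW // ltn_expl.
Unshelve. all: end_near. Qed.

Lemma floor_natrM_modz (R : realType) (s : nat) (a : R) : (0 < s)%N ->
  Num.floor (s%:R * a) = s%:Z * Num.floor a + (Num.floor (s%:R * a) %% s%:Z)%Z.
Proof.
move=> s0.
set r := Num.floor (s%:R * a) - s%:Z * Num.floor a.
have r_ge0 : 0 <= r.
  rewrite subr_ge0 floor_ge_int rmorphM /=.
  by apply: ler_wpM2l; [exact: ler0n | exact: floor_le].
have r_lt_s : r < s%:Z.
  rewrite ltrBlDl floor_lt_int -[X in _ + X]mulr1 -mulrDr rmorphM /=.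
  by rewrite ltr_pM2l ?ltr0n // floorD1_gt.
have -> : Num.floor (s%:R * a) = Num.floor a * s%:Z + r by rewrite /r; ring.
by rewrite modzMDl modz_small ?r_ge0 // mulrC.
Qed.

Lemma floor_expr_digits0 (R : realType) (s m t : nat) (z : R) : (0 < s)%N ->
  (forall u, (0 < u <= t)%N -> digit s (m + u) z = 0%Z) ->
  Num.floor (s%:R ^+ (m + t) * z) = s%:Z ^+ t * Num.floor (s%:R ^+ m * z).
Proof.
move=> s0; elim: t => [|t IH] digits0; first by rewrite addn0 expr0 mul1r.
have digit0 := digits0 t.+1 (leqnn _).
rewrite /digit addnS exprS -mulrA in digit0.
rewrite addnS exprS -mulrA floor_natrM_modz // digit0 addr0 IH ?exprS ?mulrA //.
by move=> u /andP[u0 ut]; apply: digits0; rewrite u0 ltnW.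
Qed.

(* By [floor_expr_digits0], [s^g (s^m z)] lies in [[s^g f, s^g f + 1)]
   where [f = floor (s^m z)]. *)
Lemma dist_floor_digits0 (R : realType) (s m g : nat) (z : R) : (0 < s)%N ->
  (forall u, (0 < u <= g)%N -> digit s (m + u) z = 0%Z) ->
  `|z * s%:R ^+ m - (Num.floor (s%:R ^+ m * z))%:~R| <= (s%:R ^+ g)^-1.
Proof.
move=> s0 digits0.
have sg_gt0 : (0 : R) < s%:R ^+ g by rewrite exprn_gt0 // ltr0n.
have floor_lt := floorD1_gt (s%:R ^+ (m + g) * z).
rewrite floor_expr_digits0 // rmorphD rmorphM /= rmorphXn /= rmorph1 in floor_lt.
rewrite (addnC m g) exprD -mulrA in floor_lt.
have floor_le := floor_le (s%:R ^+ m * z).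
rewrite mulrC ger0_norm ?subr_ge0 // -(ler_pM2l sg_gt0) mulfV ?gt_eqF //.
move: floor_lt floor_le; set c := s%:R ^+ g; set A := s%:R ^+ m * z.
set f := ((Num.floor A)%:~R : R); rewrite mulrBr; nra.
Qed.

Lemma powRN_expr_div (R : realType) (a : R) (m g : nat) : 0 <= a -> (0 < m)%N ->
  (a ^+ m) `^ (- (g%:R / m%:R)) = (a ^+ g)^-1.
Proof.
move=> a0 m0; rewrite -!powR_mulrn // -powRrM mulrN powRN.
by rewrite mulrCA mulfV ?mulr1 // pnatr_eq0 -lt0n.
Qed.

Section DigitGaps.
Context {R : realType} {k s : nat} {z : 'I_k -> R} {b : nat -> nat}.
Hypotheses (s2 : (2 <= s)%N) (hb : increasing_enum (nz_digit_positions s z) b).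

Lemma increasing_enum_digits_gt0 n : (0 < b n)%N.
Proof. by have [] : nz_digit_positions s z (b n) by rewrite -hb.2; exists n. Qed.

Lemma digit_enum_gap n i j : (b n < j < b n.+1)%N -> digit s j (z i) = 0%Z.
Proof.
move=> gap; have [//|digit_neq0] := eqVneq (digit s j (z i)) 0%Z.
by case: (increasing_enum_gap hb _ _ gap); split; [case/andP: gap; lia | exists i].
Qed.

Lemma approx_exponents_digit_gap n :
  approx_exponents z ((s%:R : R) ^+ b n)
    (((b n.+1)%:R - (b n)%:R - 1) / (b n)%:R).
Proof.
have s0 : (0 < s)%N by exact: leq_trans s2.
have bn_lt := hb.1 n.
have -> : (b n.+1)%:R - (b n)%:R - 1 = (b n.+1 - b n - 1)%N%:R :> R.
  by rewrite -subnDA natrB ?addn1 // mulrSr opprD addrA.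
exists (s ^ b n)%N%:Z, (fun i => Num.floor (s%:R ^+ b n * z i)).
split; first by left; rewrite gt_eqF // ltz_nat expn_gt0 s0.
rewrite -pmulrn natrX ger0_norm ?exprn_ge0 ?ler0n //; split => // i.
rewrite powRN_expr_div ?ler0n ?increasing_enum_digits_gt0 //.
by apply: dist_floor_digits0 => // u /andP[u0 ug]; apply: (digit_enum_gap n); lia.
Qed.

End DigitGaps.

Lemma approx_exponents_oneB (R : realType) k (zeta : 'I_k -> R) (X : R) :
  approx_exponents (fun i => 1 - zeta i) X `<=` approx_exponents zeta X.
Proof.
move=> nu [x [y [nz [x_le approx]]]].
exists x, (fun i => x - y i); split; last split=> // i.
  case: nz => [|[i y_neq0]]; first by left.
  have [->|x_neq0] := eqVneq x 0%Z; last by left.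
  by right; exists i; rewrite sub0r oppr_eq0.
have := approx i; rewrite rmorphB /= -normrN; congr (`|_| <= _); ring.
Qed.

Lemma limn_esup_le_omega (R : realType) k (zeta : 'I_k -> R) (X u : nat -> R) :
  (forall n, approx_exponents zeta (X n) (u n)) -> X n @[n --> \oo] --> +oo ->
  (limn_esup (fun n => (u n)%:E) <= omega zeta)%E.
Proof.
move=> approx Xoo; apply: le_ereal_inf_tmp => _ [V V_oo <-].
rewrite /limn_esup /limf_esup.
apply: (le_trans (ereal_inf_lbound
  (x := ereal_sup [set (u n)%:E | n in [set n | V (X n)]]) _)).
  by exists [set n | V (X n)]; first exact: Xoo.
apply: ge_ereal_sup => _ [n XnV <-].
have omega1_le : (omega1 zeta (X n) <= ereal_sup (omega1 zeta @` V))%E.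
  by apply: ereal_sup_ubound; exists (X n).
by apply: le_trans omega1_le; apply: ereal_sup_ubound; exists (u n).
Qed.

Theorem corollary2p2 (R : realType) (k : nat) (zeta : 'I_k -> R)
  (b b' : nat -> nat -> nat) :
  (1 <= k)%N ->
  (forall i, 0 < zeta i < 1) ->
  (forall (q0 : rat) (q : 'I_k -> rat),
      ratr q0 + \sum_(i < k) ratr (q i) * zeta i = 0 ->
      q0 = 0 /\ forall i, q i = 0) ->
  (forall s, (2 <= s)%N -> increasing_enum (nz_digit_positions s zeta) (b s)) ->
  (forall s, (2 <= s)%N ->
      increasing_enum (nz_digit_positions s (fun i => 1 - zeta i)) (b' s)) ->
  (maxe (ereal_sup [set gap_limsup (R:=R) (b s) | s in [set s | (2 <= s)%N]])
        (ereal_sup [set gap_limsup (R:=R) (b' s) | s in [set s | (2 <= s)%N]])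
   <= omega zeta)%E.
Proof.
move=> _ _ _ hb hb'.
rewrite ge_max; apply/andP; split; apply: ge_ereal_sup => _ [s /= s2 <-].
- apply: limn_esup_le_omega (expr_enum_cvgy R s2 (hb s s2)) => n.
  exact: approx_exponents_digit_gap s2 (hb s s2) n.
- apply: limn_esup_le_omega (expr_enum_cvgy R s2 (hb' s s2)) => n.
  exact/approx_exponents_oneB/(approx_exponents_digit_gap s2 (hb' s s2)).
Qed.
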